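(* Let $T=(V,E)$ be a tree with $\mathrm{pthin}(T)=2$, and let $\sigma$ be an ordering of $V$ and $S=\{V^0,V^1\}$ a partition of $V$ into two classes that are strongly consistent. Let $v\in V^0$ and let $w_1,w_2,w_3\in N(v)\cap V^1$ with $w_1<w_2<w_3$. Then $w_2$ has degree $1$ in $T$.
   Context: For a graph $G=(V,E)$, a linear ordering $<$ of $V$ and a partition of $V$ into classes are called strongly consistent if for every triple $r<s<t$ of vertices with $rt\in E$: if $r$ and $s$ belong to the same class then $st\in E$, and if $s$ and $t$ belong to the same class then $rs\in E$. The proper thinness $\mathrm{pthin}(G)$ is the minimum $k$ such that some ordering and some partition into $k$ classes are strongly consistent. $N(v)$ is the set of neighbors of $v$. *)

From mathcomp Require Import all_boot.
Set Implicit Arguments. Unset Strict Implicit. Unset Printing Implicit Defensive.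

Definition simple_graph (T : finType) (e : rel T) : Prop :=
  symmetric e /\ irreflexive e.

Definition connected_graph (T : finType) (e : rel T) : Prop :=
  forall x y : T, connect e x y.

Definition has_cycle (T : finType) (e : rel T) : Prop :=
  exists (x : T) (p : seq T),
    [/\ 2 <= size p, uniq (x :: p), path e x p & e (last x p) x].

Definition is_tree (T : finType) (e : rel T) : Prop :=
  simple_graph e /\ connected_graph e /\ ~ has_cycle e.

(* A linear ordering of V is given by an injective rank rk : T -> nat,
   with r < s iff rk r < rk s.  A partition into classes is given by a
   class map cls : T -> K (the classes are the nonempty fibres). *)
Definition strongly_consistent (T : finType) (e : rel T) (rk : T -> nat)
  (K : eqType) (cls : T -> K) : Prop :=
  forall r s t : T, rk r < rk s -> rk s < rk t -> e r t ->
    (cls r = cls s -> e s t) /\ (cls s = cls t -> e r s).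

Definition pthin_le (T : finType) (e : rel T) (k : nat) : Prop :=
  exists (rk : T -> nat) (cls : T -> 'I_k),
    injective rk /\ strongly_consistent e rk cls.

Definition pthin_eq (T : finType) (e : rel T) (k : nat) : Prop :=
  pthin_le e k /\ forall k', k' < k -> ~ pthin_le e k'.

Definition nbhd (T : finType) (e : rel T) (v : T) : {set T} := [set w | e v w].
Definition degree (T : finType) (e : rel T) (v : T) : nat := #|nbhd e v|.

From mathcomp Require Import all_boot.
From mathcomp Require Import zify.

Set Implicit Arguments.
Unset Strict Implicit.
Unset Printing Implicit Defensive.

(* Suppose [w2] had a neighbour [u] besides [v].  A tree has no triangle or
   square, so [u] is adjacent to none of [v], [w1], [w3], and [w1], [w3] are
   not adjacent to [w2].  Strong consistency forbids a vertex to lie strictly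
   between the endpoints of an edge when it is adjacent to neither endpoint but
   shares a class with one of them.  Applied to the edges [w2u], [vw1], [vw3],
   this leaves [u] no admissible rank relative to [w1 < w2 < w3] and [v]. *)

Lemma strongly_consistent_not_between (T : finType) (e : rel T) (rk : T -> nat)
    (K : eqType) (cls : T -> K) (a b x : T) :
  symmetric e -> strongly_consistent e rk cls ->
  e a b -> ~~ e a x -> ~~ e x b -> cls x = cls a \/ cls x = cls b ->
  ~ (rk a < rk x < rk b) /\ ~ (rk b < rk x < rk a).
Proof.
move=> e_sym sc eab nax nxb clsx.
have between (a' b' : T) : e a' b' -> ~~ e a' x -> ~~ e x b' ->
    cls x = cls a' \/ cls x = cls b' -> ~ (rk a' < rk x < rk b').
  move=> eab' nax' nxb' clsx' /andP[lt_ax lt_xb].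
  have [sc_l sc_r] := sc _ _ _ lt_ax lt_xb eab'.
  case: clsx' => [/esym/sc_l|/sc_r]; exact/negP.
split; first exact: between.
by apply: between; [rewrite e_sym | rewrite e_sym | rewrite e_sym | tauto].
Qed.

Lemma no_rank_avoiding_intervals (v u w1 w2 w3 : nat) :
  w1 < w2 < w3 -> u != w1 -> u != w3 -> u != v ->
  ~ (w2 < w1 < u) /\ ~ (u < w1 < w2) -> ~ (w2 < w3 < u) /\ ~ (u < w3 < w2) ->
  ~ (v < u < w1) /\ ~ (w1 < u < v) -> ~ (v < u < w3) /\ ~ (w3 < u < v) -> False.
Proof. lia. Qed.

Section AcyclicGraph.

Variables (T : finType) (e : rel T).
Hypotheses (e_sym : symmetric e) (e_irr : irreflexive e) (e_acyclic : ~ has_cycle e).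

Lemma edge_neq (x y : T) : e x y -> x != y.
Proof. by apply: contraTneq => ->; rewrite e_irr. Qed.

Lemma acyclic_no_triangle (x y z : T) : e x y -> e y z -> ~~ e z x.
Proof.
move=> exy eyz; apply/negP => ezx; apply: e_acyclic.
exists x, [:: y; z]; split => //=; last by rewrite exy eyz.
by rewrite !inE negb_or !edge_neq //= e_sym.
Qed.

Lemma acyclic_no_square (x y z w : T) :
  e x y -> e y z -> e z w -> x != z -> y != w -> ~~ e w x.
Proof.
move=> exy eyz ezw nxz nyw; apply/negP => ewx; apply: e_acyclic.
exists x, [:: y; z; w]; split => //=; last by rewrite exy eyz ezw.
by rewrite !inE !negb_or nxz nyw !edge_neq //= e_sym.
Qed.

Variables (rk : T -> nat) (cls : T -> bool).
Hypotheses (rk_inj : injective rk) (sc : strongly_consistent e rk cls).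

Lemma acyclic_strongly_consistent_middle_neighbour (v w1 w2 w3 u : T) :
  cls v != cls w2 -> cls w1 = cls w2 -> cls w3 = cls w2 ->
  e v w1 -> e v w2 -> e v w3 -> rk w1 < rk w2 < rk w3 ->
  e w2 u -> u = v.
Proof.
move=> cls_v cls_w1 cls_w3 e1 e2 e3 rk_w eu.
apply/eqP/negPn/negP => nuv.
have [lt12 lt23] := andP rk_w.
have n_w12 : w1 != w2 by apply: contraTneq lt12 => ->; rewrite ltnn.
have n_w32 : w3 != w2 by apply: contraTneq lt23 => ->; rewrite ltnn.
have nvu : ~~ e v u by apply: (acyclic_no_triangle (y := w2)); rewrite e_sym.
have n12 : ~~ e w1 w2 by apply: (acyclic_no_triangle _ e1); rewrite e_sym.
have n32 : ~~ e w3 w2 by apply: (acyclic_no_triangle _ e3); rewrite e_sym.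
have nu1 : ~~ e u w1 by apply: (acyclic_no_square _ e2 eu); rewrite 1?e_sym // eq_sym.
have nu3 : ~~ e u w3 by apply: (acyclic_no_square _ e2 eu); rewrite 1?e_sym // eq_sym.
have u_not_between_v (w : T) : e v w -> cls w = cls w2 -> ~~ e u w ->
    ~ (rk v < rk u < rk w) /\ ~ (rk w < rk u < rk v).
  move=> ew clsw nuw; apply: (strongly_consistent_not_between e_sym sc) => //.
  rewrite clsw; move: cls_v.
  by case: (cls u); case: (cls v); case: (cls w2); by [left | right].
have not_between_w2u (x : T) : ~~ e x w2 -> ~~ e u x -> cls x = cls w2 ->
    ~ (rk w2 < rk x < rk u) /\ ~ (rk u < rk x < rk w2).
  move=> nx2 nux clsx.
  apply: (strongly_consistent_not_between e_sym sc);
    [done | by rewrite e_sym | by rewrite e_sym | by left].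
apply: (no_rank_avoiding_intervals (v := rk v) (u := rk u) rk_w).
- by rewrite (inj_eq rk_inj); apply: contraNneq n12 => <-; rewrite e_sym.
- by rewrite (inj_eq rk_inj); apply: contraNneq n32 => <-; rewrite e_sym.
- by rewrite (inj_eq rk_inj).
- exact: not_between_w2u.
- exact: not_between_w2u.
- exact: u_not_between_v.
- exact: u_not_between_v.
Qed.

End AcyclicGraph.

Theorem propositionA2 (T : finType) (e : rel T) (rk : T -> nat) (cls : T -> bool)
  (v w1 w2 w3 : T) :
  is_tree e -> pthin_eq e 2 ->
  injective rk -> (exists x, cls x) -> (exists x, ~~ cls x) ->
  strongly_consistent e rk cls ->
  cls v = false ->
  w1 \in nbhd e v -> w2 \in nbhd e v -> w3 \in nbhd e v ->
  cls w1 = true -> cls w2 = true -> cls w3 = true ->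
  rk w1 < rk w2 -> rk w2 < rk w3 ->
  degree e w2 = 1.
Proof.
move=> [[e_sym e_irr] [_ e_acyclic]] _ rk_inj _ _ sc cls_v.
rewrite !inE => e1 e2 e3 cls_w1 cls_w2 cls_w3 lt12 lt23.
have nbhd_w2 : nbhd e w2 = [set v].
  apply/setP => u; rewrite !inE; apply/idP/eqP => [eu|->]; last by rewrite e_sym.
  apply: (acyclic_strongly_consistent_middle_neighbour e_sym e_irr e_acyclic rk_inj sc
           _ _ _ e1 e2 e3 _ eu); first by rewrite cls_v cls_w2.
  - by rewrite cls_w1 cls_w2.
  - by rewrite cls_w3 cls_w2.
  - by rewrite lt12 lt23.
by rewrite /degree nbhd_w2 cards1.
Qed.
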